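(* Let $V$ be a real vector space of dimension $n$, $1\le k\le n-1$. For $B\in\wedge^{k+1}V^*$ and a subspace $L\subseteq V\oplus\wedge^kV^*$ set $e^BL=\{X+\alpha+i_XB\mid X+\alpha\in L\}$. Then: (a) if $L\subseteq\wedge^kV^*$ is weakly lagrangian, then $e^BL$ is weakly lagrangian for every $B\in\wedge^{k+1}V^*$; (b) if $L$ is a standard weakly lagrangian subspace with $\mathrm{pr}_1(L)\neq\{0\}$, then $e^BL$ is weakly lagrangian for every $B\in\wedge^{k+1}V^*$ if and only if $L$ is lagrangian; (c) if $L$ is a non-standard weakly lagrangian subspace, then there exists $B\in\wedge^{k+1}V^*$ such that $e^BL$ is not weakly lagrangian.
   Context: On $V\oplus\wedge^kV^*$ consider the pairing $\langle X+\alpha,Y+\beta\rangle=i_X\beta+i_Y\alpha\in\wedge^{k-1}V^*$; $L^\perp$ is the orthogonal of $L$; $L$ is isotropic if $L\subseteq L^\perp$, lagrangian if $L=L^\perp$, and weakly lagrangian if isotropic and $L\cap V=\mathrm{pr}_2(L)^\circ$, where $\mathrm{pr}_1,\mathrm{pr}_2$ are the projections onto $V$, $\wedge^kV^*$, and for $S\subseteq\wedge^kV^*$, $S^\circ=\{X\in V\mid i_X\eta=0\ \forall\eta\in S\}$. For $E\subseteq V$, $\mathrm{Ann}(E)=\{\alpha\in\wedge^kV^*\mid i_Y\alpha=0\ \forall Y\in E\}$. An isotropic $L$ with $E=\mathrm{pr}_1(L)$ is standard if $\mathrm{Ann}(E)^\circ=E$ (equivalently $\dim E=n$ or $\dim E\le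 n-k$), and non-standard otherwise. *)

From HB Require Import structures.
From mathcomp Require Import all_boot all_order all_algebra.
From mathcomp Require Import reals.
Set Implicit Arguments. Unset Strict Implicit. Unset Printing Implicit Defensive.
Import Order.TTheory GRing.Theory Num.Theory.
Local Open Scope ring_scope.

(* A (candidate) element of wedge^p V^* is
   a function on finite sequences of vectors; only its values on sequences of
   length p matter.  [is_form p f] says f is an alternating p-linear form on V
   (and vanishes on sequences of the wrong length, so that equality of forms
   is pointwise equality of functions). *)
Definition kform (R : realType) (n : nat) := seq 'rV[R]_n -> R.

Definition is_form (R : realType) (n p : nat) (f : kform R n) : Prop :=
  [/\ (forall s, size s <> p -> f s = 0),
      (forall (s1 s2 : seq 'rV[R]_n) (a : R) (x y : 'rV[R]_n),
          (size s1 + size s2).+1 = p ->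
          f (s1 ++ (a *: x + y) :: s2) = a * f (s1 ++ x :: s2) + f (s1 ++ y :: s2))
    & (forall s, size s = p -> ~~ uniq s -> f s = 0)].

Definition iprod (R : realType) (n : nat) (X : 'rV[R]_n) (a : kform R n) : kform R n :=
  fun s => a (X :: s).

Definition zero_form (R : realType) (n : nat) : kform R n := fun _ => 0.

Definition sub_pred (R : realType) (n : nat) := 'rV[R]_n -> kform R n -> Prop.

Definition is_subspace (R : realType) (n k : nat) (L : sub_pred R n) : Prop :=
  [/\ (forall X a, L X a -> is_form k a),
      L 0 (@zero_form R n)
    & (forall (c : R) X a Y b, L X a -> L Y b ->
          L (c *: X + Y) (fun s => c * a s + b s))].

Definition pair_zero (R : realType) (n : nat) X (a : kform R n) Y (b : kform R n) : Prop :=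
  forall s, iprod X b s + iprod Y a s = 0.

Definition Lperp (R : realType) (n k : nat) (L : sub_pred R n) : sub_pred R n :=
  fun Y b => is_form k b /\ forall X a, L X a -> pair_zero X a Y b.

Definition isotropic (R : realType) (n : nat) (L : sub_pred R n) : Prop :=
  forall X a Y b, L X a -> L Y b -> pair_zero X a Y b.

Definition lagrangian (R : realType) (n k : nat) (L : sub_pred R n) : Prop :=
  forall Y b, L Y b <-> Lperp k L Y b.

Definition prV (R : realType) (n : nat) (L : sub_pred R n) : 'rV[R]_n -> Prop :=
  fun X => exists a, L X a.

Definition prW (R : realType) (n : nat) (L : sub_pred R n) : kform R n -> Prop :=
  fun a => exists X, L X a.

Definition capV (R : realType) (n : nat) (L : sub_pred R n) : 'rV[R]_n -> Prop :=
  fun X => L X (@zero_form R n).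

Definition polar (R : realType) (n : nat) (S : kform R n -> Prop) : 'rV[R]_n -> Prop :=
  fun X => forall eta, S eta -> forall s, iprod X eta s = 0.

Definition Ann (R : realType) (n k : nat) (E : 'rV[R]_n -> Prop) : kform R n -> Prop :=
  fun a => is_form k a /\ forall Y, E Y -> forall s, iprod Y a s = 0.

Definition weakly_lagrangian (R : realType) (n : nat) (L : sub_pred R n) : Prop :=
  isotropic L /\ forall X, capV L X <-> polar (prW L) X.

Definition standard (R : realType) (n k : nat) (L : sub_pred R n) : Prop :=
  forall X, polar (Ann k (prV L)) X <-> prV L X.

Definition eB (R : realType) (n : nat) (B : kform R n) (L : sub_pred R n) : sub_pred R n :=
  fun Y c => exists X a, [/\ L X a, Y = X & c = (fun s => a s + iprod X B s)].

From mathcomp Require Import all_boot all_order all_algebra.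
From mathcomp Require Import reals boolp.
From mathcomp Require Import ring lra.
Set Implicit Arguments. Unset Strict Implicit. Unset Printing Implicit Defensive.
Import Order.TTheory GRing.Theory Num.Theory.
Local Open Scope ring_scope.

(* If a
   subspace M ⊆ pr_1 L already lies in e^B L ∩ V and X_1 + a_1 ∈ L with X_1 ∉ M, take a
   linear form ξ with ξ(X_1) = 1 and ξ(M) = 0 and replace B by B - ξ ∧ (a_1 + i_{X_1} B):
   this puts X_1 in e^B L ∩ V, and by isotropy the correction has zero interior product
   with M.  Iterating yields B with pr_1 L ⊆ e^B L ∩ V; then pr_2(e^B L) ⊆ L ∩ ∧^k V^* ⊆
   Ann(pr_1 L), so the polar of pr_2(e^B L) contains Ann(pr_1 L)°, which is larger than
   pr_1 L exactly when L is non-standard: this is (c).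
   For (b), given X_1 ≠ 0 in pr_1 L and η ∈ Ann(pr_1 L), weak lagrangianity of e^B L for
   B = ξ ∧ (η - a_1) forces η ∈ L; a standard L containing Ann(pr_1 L) is lagrangian, and
   e^B of a lagrangian subspace is lagrangian.  For (a), e^B L = L. *)

Section Forms.
Variables (R : realType) (n : nat).
Implicit Types (f g : kform R n) (x y : 'rV[R]_n) (s t : seq 'rV[R]_n).

Lemma form_size p f s : is_form p f -> size s <> p -> f s = 0.
Proof. by case=> + _ _; apply. Qed.

Lemma form_lin_head p f c x y s : is_form p f ->
  f ((c *: x + y) :: s) = c * f (x :: s) + f (y :: s).
Proof.
move=> f_p; case: (f_p) => _ f_lin _.
have [sp|/eqP sNp] := eqVneq (size s).+1 p; first exact: (f_lin [::]).
have f0 z : f (z :: s) = 0 by apply: (form_size f_p).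
by rewrite !f0 mulr0 addr0.
Qed.

Lemma form_head0 p f s : is_form p f -> f (0 :: s) = 0.
Proof.
by move=> f_p; have := form_lin_head 1 0 0 s f_p; rewrite scale1r addr0 mul1r; lra.
Qed.

Lemma form_swap p f x y t : is_form p f -> f (x :: y :: t) = - f (y :: x :: t).
Proof.
move=> f_p; case: (f_p) => _ f_lin f_alt.
have [tp|/eqP tNp] := eqVneq (size t).+2 p; last first.
  have f0 z w : f (z :: w :: t) = 0 by apply: (form_size f_p).
  by rewrite !f0 oppr0.
have dup z : f (z :: z :: t) = 0 by apply: f_alt => //=; rewrite inE eqxx.
have lin2 z : f (z :: (1 *: x + y) :: t) = f (z :: x :: t) + f (z :: y :: t).
  by rewrite (f_lin [:: z] t 1 x y) ?mul1r //= addnC.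
have := dup (1 *: x + y); rewrite (form_lin_head _ _ _ _ f_p) !mul1r !lin2 !dup.
lra.
Qed.

Lemma form_dup_head p f x t : is_form p f -> f (x :: x :: t) = 0.
Proof. by move=> f_p; have := form_swap x x t f_p; lra. Qed.

Lemma iprod_form p f x : is_form p.+1 f -> is_form p (iprod x f).
Proof.
case=> f_size f_lin f_alt; split.
- by move=> s sNp; apply: f_size => -[].
- by move=> s1 s2 c y z e; apply: (f_lin (x :: s1)); rewrite /= -e.
- by move=> s sp s_dup; apply: f_alt; rewrite /= ?sp // negb_and s_dup orbT.
Qed.

Lemma form_move p f x q r : is_form p f ->
  f (x :: q ++ r) = (-1) ^+ size q * f (q ++ x :: r).
Proof.
elim: q p f => [|z q IHq] p f f_p /=; first by rewrite expr0 mul1r.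
rewrite (form_swap _ _ _ f_p); case: p f_p => [|p] f_p.
  by rewrite !(form_size f_p) ?mulr0 ?oppr0.
by have := IHq p _ (iprod_form z f_p); rewrite /iprod exprS => ->; ring.
Qed.

Lemma formD p f g : is_form p f -> is_form p g -> is_form p (fun s => f s + g s).
Proof.
case=> f_size f_lin f_alt [g_size g_lin g_alt]; split.
- by move=> s sNp; rewrite f_size // g_size // addr0.
- by move=> s1 s2 a y z e; rewrite f_lin // g_lin //; ring.
- by move=> s sp s_dup; rewrite f_alt // g_alt // addr0.
Qed.

Lemma formN p f : is_form p f -> is_form p (fun s => - f s).
Proof.
case=> f_size f_lin f_alt; split.
- by move=> s sNp; rewrite f_size ?oppr0.
- by move=> s1 s2 a y z e; rewrite f_lin //; ring.
- by move=> s sp s_dup; rewrite f_alt ?oppr0.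
Qed.

Lemma form_zero p : is_form p (@zero_form R n).
Proof. by split=> *; rewrite /zero_form ?mulr0 ?addr0. Qed.

End Forms.

Section Wedge.
Variables (R : realType) (n : nat) (xi : 'rV[R]_n -> R).
Hypothesis xi_lin : forall c x y, xi (c *: x + y) = c * xi x + xi y.
Implicit Types (g : kform R n) (x y : 'rV[R]_n) (s t : seq 'rV[R]_n).

(* [wedge g] is the exterior product [xi /\ g], expanded along its first argument. *)
Fixpoint wedge g s : R :=
  if s is x :: s' then xi x * g s' - wedge (iprod x g) s' else 0.

Lemma wedge0 g s : g =1 @zero_form R n -> wedge g s = 0.
Proof.
elim: s g => //= x s IHs g g0; rewrite g0 IHs ?mulr0 ?subr0 //.
by move=> t; apply: g0.
Qed.

Lemma wedge_iprod g x s : (forall t, g (x :: t) = 0) ->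
  wedge g (x :: s) = xi x * g s.
Proof. by move=> gx0; rewrite /= wedge0 ?subr0. Qed.

Lemma wedge_comb c g1 g2 s :
  wedge (fun t => c * g1 t + g2 t) s = c * wedge g1 s + wedge g2 s.
Proof.
elim: s g1 g2 => /= [|x s IHs] g1 g2; first by ring.
by rewrite [wedge (iprod x _) s]IHs; ring.
Qed.

Lemma wedge_size p g s : is_form p g -> size s <> p.+1 -> wedge g s = 0.
Proof.
elim: s p g => //= x s IHs p g g_p sNp.
rewrite (form_size g_p); last by move=> sp; apply: sNp; rewrite sp.
case: p g_p sNp => [|p] g_p sNp.
  by rewrite wedge0 ?mulr0 ?subr0 // => t; apply: (form_size g_p).
by rewrite (IHs p) ?mulr0 ?subr0 //; [exact: iprod_form | move=> sp; apply: sNp; rewrite sp].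
Qed.

Lemma wedge_multilinear p g s1 s2 c x y : is_form p g ->
  (size s1 + size s2).+1 = p.+1 ->
  wedge g (s1 ++ (c *: x + y) :: s2) =
  c * wedge g (s1 ++ x :: s2) + wedge g (s1 ++ y :: s2).
Proof.
elim: s1 p g => [|z s1 IHs1] p g g_p /= e.
  have -> : iprod (c *: x + y) g = (fun t => c * iprod x g t + iprod y g t).
    by apply/funext => t; rewrite /iprod (form_lin_head _ _ _ _ g_p).
  by rewrite xi_lin wedge_comb; ring.
case: p g_p e => [|p] g_p // [e]; case: (g_p) => _ g_lin _.
rewrite g_lin ?e // (IHs1 p (iprod z g)) ?e //; first ring.
exact: iprod_form.
Qed.

Lemma wedge_vanish g x q r : (forall t, x \in t -> g t = 0) ->
  wedge g (q ++ x :: r) = (-1) ^+ size q * xi x * g (q ++ r).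
Proof.
elim: q g => [|z q IHq] g gx0 /=.
  by rewrite wedge0 ?expr0 ?mul1r ?subr0 // => t; rewrite /iprod gx0 // inE eqxx.
rewrite gx0 ?mem_cat ?inE ?eqxx ?orbT // IHq; last first.
  by move=> t xt; rewrite /iprod gx0 // inE xt orbT.
by rewrite exprS /iprod; ring.
Qed.

Lemma wedge_alternating p g s : is_form p g -> size s = p.+1 -> ~~ uniq s ->
  wedge g s = 0.
Proof.
elim: s p g => //= x s IHs p g g_p [sp]; rewrite negb_and negbK => /orP[xs|s_dup].
  case/splitPr: xs sp => q r qrp.
  have gx0 t : x \in t -> iprod x g t = 0.
    move=> xt; have [tp|/eqP tNp] := eqVneq (size t).+1 p.
      by case: g_p => _ _; apply => //=; rewrite xt.
    exact: (form_size g_p).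
  rewrite wedge_vanish // /iprod (form_move _ _ _ g_p) -signr_odd.
  by case: (odd (size q)); rewrite ?expr0 ?expr1; ring.
have -> : g s = 0 by case: g_p => _ _; apply.
rewrite mulr0 sub0r.
case: p g_p sp => [|p] g_p sp; first by case: s {IHs} sp s_dup.
by rewrite (IHs p) ?oppr0 //; exact: iprod_form.
Qed.

Lemma wedge_form p g : is_form p g -> is_form p.+1 (wedge g).
Proof.
move=> g_p; split.
- by move=> s; apply: wedge_size.
- by move=> s1 s2 c x y; apply: wedge_multilinear.
- by move=> s; apply: wedge_alternating.
Qed.

End Wedge.

Lemma exists_functional_notin (R : fieldType) m n (M : 'M[R]_(m, n)) (x : 'rV[R]_n) :
  ~~ (x <= M)%MS ->
  exists xi : 'rV[R]_n -> R,
    [/\ forall c y z, xi (c *: y + z) = c * xi y + xi z, xi x = 1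
      & forall y, (y <= M)%MS -> xi y = 0].
Proof.
rewrite submxE => xNM.
have [j xj] : exists j, (x *m cokermx M) 0 j != 0.
  apply/existsP; apply: contraR xNM => /existsPn xM0.
  by apply/eqP/rowP => j; rewrite [RHS]mxE; apply/eqP/negbNE/xM0.
exists (fun y => (y *m cokermx M) 0 j / (x *m cokermx M) 0 j); split.
- by move=> c y z; rewrite mulmxDl -scalemxAl !mxE mulrDl mulrA.
- by rewrite divff.
- by move=> y; rewrite submxE => /eqP ->; rewrite mxE mul0r.
Qed.

Section Subspaces.
Variables (R : realType) (n k : nat).
Implicit Types (L : sub_pred R n) (B : kform R n) (X Y Z : 'rV[R]_n).

Lemma subspace_comb L c X a Y b Z d : is_subspace k L -> L X a -> L Y b ->
  Z = c *: X + Y -> d =1 (fun s => c * a s + b s) -> L Z d.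
Proof. by case=> _ _ L_comb LXa LYb -> /funext ->; apply: L_comb. Qed.

Lemma isotropic_iprod_self L X a s : isotropic L -> L X a -> a (X :: s) = 0.
Proof. by move=> L_iso LXa; have := L_iso _ _ _ _ LXa LXa s; rewrite /iprod; lra. Qed.

Lemma lagrangian_isotropic L : lagrangian k L -> isotropic L.
Proof. by move=> L_lag X a Y b LXa /L_lag[_]; apply. Qed.

Lemma isotropic_weakly_lagrangian L : isotropic L ->
  (forall X, polar (prW L) X -> capV L X) -> weakly_lagrangian L.
Proof.
move=> L_iso polar_capV; split=> // X; split=> [LX0 eta [Y LYeta] s|]; last exact: polar_capV.
by have := L_iso _ _ _ _ LYeta LX0 s; rewrite /iprod /zero_form add0r.
Qed.

Lemma prV_polar_Ann L X : prV L X -> polar (Ann k (prV L)) X.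
Proof. by move=> EX eta [_ eta_ann]; apply: eta_ann. Qed.

Lemma capW_sub_Ann_prV L eta : is_subspace k L -> isotropic L -> L 0 eta ->
  Ann k (prV L) eta.
Proof.
case=> L_form _ _ L_iso L0eta; split; first exact: L_form L0eta.
move=> Z [a LZa] s; have := L_iso _ _ _ _ L0eta LZa s.
by rewrite /iprod (form_head0 _ (L_form _ _ LZa)) add0r.
Qed.

Lemma capV_eBP L B X :
  capV (eB B L) X <-> exists2 a, L X a & forall s, a s + B (X :: s) = 0.
Proof.
split=> [[Y [a [LYa -> a_B]]]|[a LXa a_B]].
  by exists a => // s; have := congr1 (@^~ s) a_B; rewrite /iprod /zero_form.
by exists X, a; split=> //; apply/funext => s; rewrite /zero_form /iprod a_B.
Qed.

Lemma eB_isotropic p L B : isotropic L -> is_form p B -> isotropic (eB B L).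
Proof.
move=> L_iso B_p _ _ _ _ [X [a [LXa -> ->]]] [Y [b [LYb -> ->]]] s.
have := L_iso _ _ _ _ LXa LYb s; rewrite /iprod (form_swap _ _ _ B_p); lra.
Qed.

Lemma eB_id p L B : is_form p B -> (forall X a, L X a -> X = 0) -> eB B L = L.
Proof.
move=> B_p L_W; have eB0 a : (fun s => a s + iprod 0 B s) = a.
  by apply/funext => s; rewrite /iprod (form_head0 _ B_p) addr0.
apply/funext => Y; apply/funext => c; apply/propext; split.
  by case=> X [a [LXa -> ->]]; move: (LXa); rewrite (L_W _ _ LXa) eB0.
by move=> LYc; exists Y, c; split=> //; rewrite (L_W _ _ LYc) eB0.
Qed.

Lemma capV_eB_comb p L B c X Y : is_subspace k L -> is_form p B ->
  capV (eB B L) X -> capV (eB B L) Y -> capV (eB B L) (c *: X + Y).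
Proof.
move=> L_sub B_p /capV_eBP[a LXa a_B] /capV_eBP[b LYb b_B]; apply/capV_eBP.
exists (fun s => c * a s + b s); first exact: subspace_comb LXa LYb _ _.
move=> s; rewrite (form_lin_head _ _ _ _ B_p) addrACA -mulrDr a_B b_B.
by rewrite mulr0 addr0.
Qed.

End Subspaces.

Section IsotropicSubspace.
Variables (R : realType) (n k : nat) (L : sub_pred R n).
Hypotheses (L_sub : is_subspace k L) (L_iso : isotropic L).

Lemma capV_eB_extend B (M : 'M[R]_n) X1 : is_form k.+1 B ->
  (forall Z, (Z <= M)%MS -> capV (eB B L) Z) -> prV L X1 -> ~~ (X1 <= M)%MS ->
  exists2 B', is_form k.+1 B' & forall Z, (Z <= M + X1)%MS -> capV (eB B' L) Z.
Proof.
move=> B_k M_eB [a1 LX1a1] X1NM; have [L_form _ _] := L_sub.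
have [xi [xi_lin xi1 xiM]] := exists_functional_notin X1NM.
pose al s := a1 s + B (X1 :: s).
have al_k : is_form k al by apply: formD; [exact: L_form LX1a1 | exact: iprod_form].
pose B' s := B s - wedge xi al s.
have B'_k : is_form k.+1 B' by apply: formD => //; apply/formN/wedge_form.
have al_X1 t : al (X1 :: t) = 0.
  by rewrite /al (isotropic_iprod_self _ L_iso LX1a1) (form_dup_head _ _ B_k) addr0.
have al_M Z aZ t : L Z aZ -> (forall s, aZ s + B (Z :: s) = 0) -> al (Z :: t) = 0.
  move=> LZaZ aZ_B; have := L_iso LX1a1 LZaZ t; have := aZ_B (X1 :: t).
  by rewrite /al /iprod (form_swap _ _ _ B_k); lra.
exists B' => // Z /sub_addsmxP[[u1 u2] /= ->].
rewrite (mx11_scalar u2) mul_scalar_mx addrC; apply: capV_eB_comb L_sub B'_k _ _.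
  by apply/capV_eBP; exists a1 => // s; rewrite /B' wedge_iprod // xi1 mul1r /al; ring.
have /M_eB/capV_eBP[aZ LZaZ aZ_B] := submxMl u1 M.
apply/capV_eBP; exists aZ => // s.
rewrite /B' wedge_iprod; last by move=> t; apply: al_M LZaZ aZ_B.
by rewrite xiM ?submxMl // mul0r subr0.
Qed.

Lemma exists_eB_capV_prV :
  exists2 B, is_form k.+1 B & forall X, prV L X -> capV (eB B L) X.
Proof.
suff /(_ n.+1)[B [M [B_k M_eB [E_M|/leq_trans/(_ (rank_leq_col M))]]]] :
    forall d, exists B (M : 'M[R]_n), [/\ is_form k.+1 B,
      forall Z, (Z <= M)%MS -> capV (eB B L) Z
    & (forall X, prV L X -> (X <= M)%MS) \/ (d <= \rank M)%N].
- by exists B => // X /E_M /M_eB.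
- by rewrite ltnn.
elim=> [|d [B [M [B_k M_eB [E_M|d_M]]]]].
- exists (@zero_form R n), 0; split; [exact: form_zero | | by right].
  move=> Z; rewrite submx0 => /eqP ->; apply/capV_eBP.
  by exists (@zero_form R n) => [|s]; [case: L_sub | rewrite /zero_form addr0].
- by exists B, M; split=> //; left.
have [E_M|/existsNP[X1 /not_implyP[EX1 /negP X1NM]]] :=
  pselect (forall X, prV L X -> (X <= M)%MS).
  by exists B, M; split=> //; left.
have [B' B'_k M'_eB] := capV_eB_extend B_k M_eB EX1 X1NM.
exists B', (M + X1)%MS; split=> //; right.
have : (M < M + X1)%MS.
  rewrite ltmxE addsmxSl /=; apply: contra X1NM.
  exact: submx_trans (addsmxSr M X1).
by rewrite ltmxErank => /andP[_]; apply: leq_ltn_trans d_M.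
Qed.

Lemma not_standard_eB_not_weakly_lagrangian : ~ standard k L ->
  exists B, is_form k.+1 B /\ ~ weakly_lagrangian (eB B L).
Proof.
move=> L_nstd; have [B B_k E_eB] := exists_eB_capV_prV.
exists B; split=> // -[_ eB_wl].
have [X0 [X0_polar X0NE]] : exists X0, polar (Ann k (prV L)) X0 /\ ~ prV L X0.
  apply: contrapT => noX0; apply: L_nstd => X; split; last exact: prV_polar_Ann.
  by move=> X_polar; apply: contrapT => XNE; apply: noX0; exists X.
apply: X0NE; have /eB_wl/capV_eBP[a LX0a _] : polar (prW (eB B L)) X0; last by exists a.
move=> _ [_ [X [a [LXa _ ->]]]] s.
have /capV_eBP[aX LXaX aX_B] := E_eB X (ex_intro _ a LXa).
have L0 : L 0 (fun s => a s - aX s).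
  by apply: (subspace_comb (c := -1) L_sub LXaX LXa); [rewrite scaleN1r addNr | move=> t; ring].
have := X0_polar _ (capW_sub_Ann_prV L_sub L_iso L0) s; have := aX_B (X0 :: s).
by rewrite /iprod; lra.
Qed.

Lemma Ann_prV_sub_capW X1 : prV L X1 -> X1 <> 0 ->
    (forall B, is_form k.+1 B -> weakly_lagrangian (eB B L)) ->
  forall eta, Ann k (prV L) eta -> L 0 eta.
Proof.
move=> [a1 LX1a1] X1n0 eB_wl eta [eta_k eta_ann]; have [L_form _ _] := L_sub.
have X1N0 : ~~ (X1 <= (0 : 'M[R]_n))%MS by rewrite submx0; apply/eqP.
have [xi [xi_lin xi1 _]] := exists_functional_notin X1N0.
pose ga s := eta s - a1 s.
have ga_k : is_form k ga by apply: formD => //; apply/formN; exact: L_form LX1a1.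
have ga_X1 t : ga (X1 :: t) = 0.
  have := eta_ann X1 (ex_intro _ a1 LX1a1) t.
  by rewrite /ga /iprod (isotropic_iprod_self _ L_iso LX1a1) subr0.
pose B := wedge xi ga.
have B_k : is_form k.+1 B by apply: wedge_form.
have B_X1 s : B (X1 :: s) = ga s by rewrite /B wedge_iprod // xi1 mul1r.
have [_ eB_capV] := eB_wl B B_k.
have /eB_capV/capV_eBP[a LX1a a_B] : polar (prW (eB B L)) X1.
  move=> _ [_ [X [a [LXa _ ->]]]] s; rewrite /iprod (form_swap _ _ _ B_k) B_X1 /ga.
  have := L_iso LXa LX1a1 s; have := eta_ann X (ex_intro _ a LXa) s.
  by rewrite /iprod; lra.
apply: (subspace_comb (c := -1) L_sub LX1a LX1a1); first by rewrite scaleN1r addNr.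
by move=> s; have := a_B s; rewrite B_X1 /ga; lra.
Qed.

Lemma lagrangian_of_Ann_prV_sub_capW : standard k L ->
  (forall eta, Ann k (prV L) eta -> L 0 eta) -> lagrangian k L.
Proof.
move=> L_std Ann_L Y b; have [L_form _ _] := L_sub.
split=> [LYb|[b_k b_perp]].
  by split=> [|X a LXa]; [exact: L_form LYb | exact: L_iso].
have [a LYa] : prV L Y.
  apply/L_std => eta /Ann_L L0eta s; have := b_perp 0 eta L0eta s.
  by rewrite /iprod (form_head0 _ b_k) add0r.
have ba_Ann : Ann k (prV L) (fun s => b s - a s).
  split; first by apply: formD => //; apply/formN; exact: L_form LYa.
  move=> Z [aZ LZaZ] s; have := b_perp Z aZ LZaZ s.
  by have := L_iso LZaZ LYa s; rewrite /iprod; lra.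
apply: (subspace_comb (c := 1) L_sub LYa (Ann_L _ ba_Ann)); first by rewrite scale1r addr0.
by move=> s; rewrite mul1r addrC subrK.
Qed.

End IsotropicSubspace.

Lemma lagrangian_eB_weakly_lagrangian (R : realType) n k (L : sub_pred R n) B :
  is_form k.+1 B -> lagrangian k L -> weakly_lagrangian (eB B L).
Proof.
move=> B_k L_lag; have L_iso := lagrangian_isotropic L_lag.
apply: isotropic_weakly_lagrangian; first exact: eB_isotropic L_iso B_k.
move=> X X_polar; apply/capV_eBP; exists (fun s => - B (X :: s)); last by move=> s; rewrite addNr.
apply/L_lag; split; first exact/formN/iprod_form.
move=> Y a LYa s; have Ya_eB : prW (eB B L) (fun s => a s + iprod Y B s).
  by exists Y, Y, a.
by have := X_polar _ Ya_eB s; rewrite /iprod (form_swap _ _ _ B_k); lra.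
Qed.

Theorem proposition3p20 (R : realType) (n k : nat) :
  (1 <= k)%N -> (k <= n - 1)%N ->
  [/\ (* (a) *)
      (forall L : sub_pred R n, is_subspace k L ->
         (forall X a, L X a -> X = 0) ->
         weakly_lagrangian L ->
         forall B : kform R n, is_form k.+1 B -> weakly_lagrangian (eB B L)),
      (* (b) *)
      (forall L : sub_pred R n, is_subspace k L ->
         weakly_lagrangian L -> standard k L ->
         (exists X, prV L X /\ X <> 0) ->
         ((forall B : kform R n, is_form k.+1 B -> weakly_lagrangian (eB B L))
            <-> lagrangian k L))
    & (* (c) *)
      (forall L : sub_pred R n, is_subspace k L ->
         weakly_lagrangian L -> ~ standard k L ->
         exists B : kform R n, is_form k.+1 B /\ ~ weakly_lagrangian (eB B L))].
Proof.
move=> _ _; split.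
- by move=> L _ L_W L_wl B B_k; rewrite (eB_id B_k L_W).
- move=> L L_sub [L_iso _] L_std [X1 [EX1 X1n0]].
  split=> [eB_wl | L_lag B B_k].
    apply: (lagrangian_of_Ann_prV_sub_capW L_sub L_iso L_std).
    exact: (Ann_prV_sub_capW L_sub L_iso EX1 X1n0 eB_wl).
  exact: lagrangian_eB_weakly_lagrangian B_k L_lag.
- by move=> L L_sub [L_iso _]; exact: not_standard_eB_not_weakly_lagrangian.
Qed.
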